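(* For all terms $t,s$ of the distributive $\lambda$-calculus, if $t\to_{\mathsf{dist}}^* s$ and $s$ is a $\to_{\mathsf{dist}}$-normal form, then $t\to_{LO}^* s$.
   Context: Terms of the distributive $\lambda$-calculus are given by the grammar $t,s,u ::= x \mid \lambda x.t \mid ts \mid \langle t,s\rangle \mid \pi_1 t \mid \pi_2 t$, considered up to $\alpha$-renaming; $t\{x:=s\}$ denotes capture-avoiding substitution. The top-level rules are: $(\lambda x.t)s \mapsto_\beta t\{x:=s\}$; $\pi_i\langle t_1,t_2\rangle \mapsto_{\pi_i} t_i$ for $i=1,2$; $\langle t,s\rangle u \mapsto_{@_\times} \langle tu, su\rangle$; $\pi_i(\lambda x.t)\mapsto_{\pi_\lambda} \lambda x.\pi_i t$ for $i=1,2$. The relation $\to_{\mathsf{dist}}$ is the closure of the union of these rules under all term constructors; $\to^*$ denotes reflexive-transitive closure; a normal form is a term with no $\to_{\mathsf{dist}}$-reduct. A term is neutral if it is a variable, an application $ts$, or a projection $\pi_i t$. Leftmost-outermost reduction $\to_{LO}$ is the smallest relation closed under the rules: $(\lambda x.t)s\to_{LO} t\{x:=s\}$; $\pi_i\langle t_1,t_2\rangle\to_{LO} t_i$ ($i=1,2$); $\langle t,s\rangle u\to_{LO}\langle tu,su\rangle$; $\pi_i(\lambda x.t)\to_{LO}\lambda x.\pi_i t$ ($i=1,2$); if $t\to_{LO}s$ and $t$ is neutral then $tu\to_{LO}su$; if $t\to_{LO}s$ then $\lambda x.t\to_{LO}\lambda x.s$; if $u$ is neutral and normal and $t\to_{LO}s$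 then $ut\to_{LO}us$; if $t\to_{LO}s$ then $\pi_i t\to_{LO}\pi_i s$; if $t\to_{LO}s$ then $\langle t,u\rangle\to_{LO}\langle s,u\rangle$; if $u$ is normal and $t\to_{LO}s$ then $\langle u,t\rangle\to_{LO}\langle u,s\rangle$. *)

From Stdlib Require Import Arith Relations.

Inductive term : Type :=
| Var : nat -> term
| Lam : term -> term                 (* \x. t, x is index 0 in t *)
| App : term -> term -> term
| Pair : term -> term -> term
| Proj : bool -> term -> term.       (* Proj true = pi_1, Proj false = pi_2 *)

Fixpoint lift (k : nat) (t : term) : term :=
  match t with
  | Var n => if Nat.ltb n k then Var n else Var (S n)
  | Lam t => Lam (lift (S k) t)
  | App t u => App (lift k t) (lift k u)
  | Pair t u => Pair (lift k t) (lift k u)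
  | Proj b t => Proj b (lift k t)
  end.

(* subst k s t : capture-avoiding substitution of s for index k in t,
   decrementing indices > k (the binder is removed). *)
Fixpoint subst (k : nat) (s : term) (t : term) : term :=
  match t with
  | Var n =>
      match Nat.compare n k with
      | Lt => Var n
      | Eq => s
      | Gt => Var (pred n)
      end
  | Lam t => Lam (subst (S k) (lift 0 s) t)
  | App t u => App (subst k s t) (subst k s u)
  | Pair t u => Pair (subst k s t) (subst k s u)
  | Proj b t => Proj b (subst k s t)
  end.

(* t{x:=s} where x is the variable bound by the enclosing lambda *)
Definition subst0 (s t : term) : term := subst 0 s t.

Inductive top_step : term -> term -> Prop :=
| top_beta : forall t s, top_step (App (Lam t) s) (subst0 s t)
| top_pi1 : forall t1 t2, top_step (Proj true (Pair t1 t2)) t1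
| top_pi2 : forall t1 t2, top_step (Proj false (Pair t1 t2)) t2
| top_app_pair : forall t s u, top_step (App (Pair t s) u) (Pair (App t u) (App s u))
| top_pi_lam : forall b t, top_step (Proj b (Lam t)) (Lam (Proj b t)).

Inductive dist_step : term -> term -> Prop :=
| ds_top : forall t s, top_step t s -> dist_step t s
| ds_lam : forall t t', dist_step t t' -> dist_step (Lam t) (Lam t')
| ds_appl : forall t t' u, dist_step t t' -> dist_step (App t u) (App t' u)
| ds_appr : forall t u u', dist_step u u' -> dist_step (App t u) (App t u')
| ds_pairl : forall t t' u, dist_step t t' -> dist_step (Pair t u) (Pair t' u)
| ds_pairr : forall t u u', dist_step u u' -> dist_step (Pair t u) (Pair t u')
| ds_proj : forall b t t', dist_step t t' -> dist_step (Proj b t) (Proj b t').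

Definition normal (t : term) : Prop := forall s, ~ dist_step t s.

Definition neutral (t : term) : Prop :=
  match t with
  | Var _ | App _ _ | Proj _ _ => True
  | _ => False
  end.

Inductive lo_step : term -> term -> Prop :=
| lo_beta : forall t s, lo_step (App (Lam t) s) (subst0 s t)
| lo_pi1 : forall t1 t2, lo_step (Proj true (Pair t1 t2)) t1
| lo_pi2 : forall t1 t2, lo_step (Proj false (Pair t1 t2)) t2
| lo_app_pair : forall t s u, lo_step (App (Pair t s) u) (Pair (App t u) (App s u))
| lo_pi_lam : forall b t, lo_step (Proj b (Lam t)) (Lam (Proj b t))
| lo_appl : forall t s u, lo_step t s -> neutral t -> lo_step (App t u) (App s u)
| lo_lam : forall t s, lo_step t s -> lo_step (Lam t) (Lam s)
| lo_appr : forall u t s, neutral u -> normal u -> lo_step t s -> lo_step (App u t) (App u s)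
| lo_proj : forall b t s, lo_step t s -> lo_step (Proj b t) (Proj b s)
| lo_pairl : forall t s u, lo_step t s -> lo_step (Pair t u) (Pair s u)
| lo_pairr : forall u t s, normal u -> lo_step t s -> lo_step (Pair u t) (Pair u s).

Definition dist_star := clos_refl_trans term dist_step.
Definition lo_star := clos_refl_trans term lo_step.

(* Standardization via parallel reduction, after Takahashi.  A dist-step is a parallel
   step, and a parallel step factors as head reduction followed by an internal parallel
   step.  Internal steps never create head redexes, so head steps can be moved in front of
   them, and t ->* s factors as head reduction t ->h* u followed by a reduction u ->* s
   inside the subterms of the head spine of u.  Head steps are LO steps.  When s is normal,
   induction on s handles the internal part: normality of s makes the function of an
   application neutral and normal, and the left component of a pair normal, which are the
   side conditions of the LO rules reducing to the right. *)

From Stdlib Require Import Relations Arith Lia.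

Lemma clos_rt_map {A B : Type} (R : relation A) (S : relation B) (f : A -> B) :
  (forall x y, R x y -> S (f x) (f y)) ->
  forall x y, clos_refl_trans A R x y -> clos_refl_trans B S (f x) (f y).
Proof. intros Hf x y Hxy; induction Hxy; eauto using rt_step, rt_refl, rt_trans. Qed.

Lemma clos_rt_map_inv {A B : Type} (R : relation A) (S : relation B)
    (P : A -> Prop) (f : A -> B) :
  (forall x y, R x y -> P y -> P x) ->
  (forall x y, R x y -> P x -> S (f x) (f y)) ->
  forall x y, clos_refl_trans A R x y -> P y -> clos_refl_trans B S (f x) (f y).
Proof.
  intros Hback Hf x y Hxy Hy.
  enough (P x /\ clos_refl_trans B S (f x) (f y)) by tauto.
  revert x Hxy.
  apply clos_refl_trans_ind_right.
  - split; [exact Hy | apply rt_refl].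
  - intros x x' Hxx' [Hx' IH] _.
    assert (Hx : P x) by eauto.
    split; [exact Hx | eauto using rt_step, rt_trans].
Qed.

Ltac index_cases :=
  repeat (cbn [lift subst] in *; match goal with
  | |- context [Nat.ltb ?a ?b] => destruct (Nat.ltb_spec a b)
  | |- context [Nat.compare ?a ?b] => destruct (Nat.compare_spec a b)
  end); try lia; try reflexivity; try (f_equal; lia).

Lemma lift_lift t k j : k <= j -> lift k (lift j t) = lift (S j) (lift k t).
Proof.
  revert k j; induction t; intros k j Hkj; simpl; try (f_equal; auto; fail).
  - index_cases.
  - f_equal; apply IHt; lia.
Qed.

Lemma lift_subst_le t k j s : k <= j ->
  lift k (subst j s t) = subst (S j) (lift k s) (lift k t).
Proof.
  revert k j s; induction t; intros k j s Hkj; simpl; try (f_equal; auto; fail).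
  - index_cases.
  - rewrite IHt, (lift_lift s 0 k) by lia; reflexivity.
Qed.

Lemma lift_subst_ge t k j s : j <= k ->
  lift k (subst j s t) = subst j (lift k s) (lift (S k) t).
Proof.
  revert k j s; induction t; intros k j s Hjk; simpl; try (f_equal; auto; fail).
  - index_cases.
  - rewrite IHt, (lift_lift s 0 k) by lia; reflexivity.
Qed.

Lemma subst_lift t k s : subst k s (lift k t) = t.
Proof.
  revert k s; induction t; intros k s; simpl; try (f_equal; auto; fail); index_cases.
Qed.

Lemma subst_subst t j k s u : j <= k ->
  subst k s (subst j u t) = subst j (subst k s u) (subst (S k) (lift j s) t).
Proof.
  revert j k s u; induction t; intros j k s u Hjk; simpl; try (f_equal; auto; fail).
  - index_cases. rewrite subst_lift; reflexivity.
  - rewrite IHt, lift_subst_le, (lift_lift s 0 j) by lia; reflexivity.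
Qed.

Inductive par : term -> term -> Prop :=
| par_var : forall n, par (Var n) (Var n)
| par_lam : forall t t', par t t' -> par (Lam t) (Lam t')
| par_app : forall t t' u u', par t t' -> par u u' -> par (App t u) (App t' u')
| par_pair : forall t t' u u', par t t' -> par u u' -> par (Pair t u) (Pair t' u')
| par_proj : forall b t t', par t t' -> par (Proj b t) (Proj b t')
| par_beta : forall t t' u u', par t t' -> par u u' -> par (App (Lam t) u) (subst0 u' t')
| par_pi1 : forall t1 t1' t2, par t1 t1' -> par (Proj true (Pair t1 t2)) t1'
| par_pi2 : forall t1 t2 t2', par t2 t2' -> par (Proj false (Pair t1 t2)) t2'
| par_app_pair : forall t t' s s' u u', par t t' -> par s s' -> par u u' ->
    par (App (Pair t s) u) (Pair (App t' u') (App s' u'))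
| par_pi_lam : forall b t t', par t t' -> par (Proj b (Lam t)) (Lam (Proj b t')).

(* Internal parallel reduction: no redex on the head spine of [App]/[Proj] is contracted. *)
Inductive ipar : term -> term -> Prop :=
| ipar_var : forall n, ipar (Var n) (Var n)
| ipar_lam : forall t t', par t t' -> ipar (Lam t) (Lam t')
| ipar_pair : forall t t' u u', par t t' -> par u u' -> ipar (Pair t u) (Pair t' u')
| ipar_app : forall t t' u u', ipar t t' -> par u u' -> ipar (App t u) (App t' u')
| ipar_proj : forall b t t', ipar t t' -> ipar (Proj b t) (Proj b t').

Inductive head_step : term -> term -> Prop :=
| head_top : forall t s, top_step t s -> head_step t s
| head_app : forall t t' u, head_step t t' -> head_step (App t u) (App t' u)
| head_proj : forall b t t', head_step t t' -> head_step (Proj b t) (Proj b t').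

Definition head_star := clos_refl_trans term head_step.

Inductive internal_star : term -> term -> Prop :=
| istar_var : forall n, internal_star (Var n) (Var n)
| istar_lam : forall t t', dist_star t t' -> internal_star (Lam t) (Lam t')
| istar_pair : forall t t' u u', dist_star t t' -> dist_star u u' ->
    internal_star (Pair t u) (Pair t' u')
| istar_app : forall t t' u u', internal_star t t' -> dist_star u u' ->
    internal_star (App t u) (App t' u')
| istar_proj : forall b t t', internal_star t t' -> internal_star (Proj b t) (Proj b t').

Lemma par_refl t : par t t.
Proof. induction t; constructor; auto. Qed.

Lemma ipar_par t t' : ipar t t' -> par t t'.
Proof. induction 1; constructor; auto. Qed.

Lemma par_lift t t' : par t t' -> forall k, par (lift k t) (lift k t').
Proof.
  induction 1; intros k; simpl; try (constructor; auto; fail).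
  - apply par_refl.
  - unfold subst0; rewrite lift_subst_ge by lia; constructor; auto.
Qed.

Lemma par_subst t t' : par t t' -> forall k u u', par u u' ->
  par (subst k u t) (subst k u' t').
Proof.
  induction 1; intros k v v' Hv; simpl; try (constructor; auto using par_lift; fail).
  - destruct (Nat.compare n k); auto using par_refl.
  - unfold subst0; rewrite subst_subst by lia; constructor; auto using par_lift.
Qed.

Lemma dist_step_par t t' : dist_step t t' -> par t t'.
Proof.
  induction 1 as [t t' Htop | | | | | |]; try (constructor; auto using par_refl; fail).
  destruct Htop; constructor; apply par_refl.
Qed.

Lemma dist_star_lam t t' : dist_star t t' -> dist_star (Lam t) (Lam t').
Proof. apply (clos_rt_map _ _ Lam), ds_lam. Qed.

Lemma dist_star_app t t' u u' :
  dist_star t t' -> dist_star u u' -> dist_star (App t u) (App t' u').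
Proof.
  intros Ht Hu; apply rt_trans with (App t' u).
  - revert Ht; apply (clos_rt_map _ _ (fun x => App x u)); intros; now apply ds_appl.
  - revert Hu; apply (clos_rt_map _ _ (App t')), ds_appr.
Qed.

Lemma dist_star_pair t t' u u' :
  dist_star t t' -> dist_star u u' -> dist_star (Pair t u) (Pair t' u').
Proof.
  intros Ht Hu; apply rt_trans with (Pair t' u).
  - revert Ht; apply (clos_rt_map _ _ (fun x => Pair x u)); intros; now apply ds_pairl.
  - revert Hu; apply (clos_rt_map _ _ (Pair t')), ds_pairr.
Qed.

Lemma dist_star_proj b t t' : dist_star t t' -> dist_star (Proj b t) (Proj b t').
Proof. apply (clos_rt_map _ _ (Proj b)), ds_proj. Qed.

Lemma dist_star_top t s u : top_step t s -> dist_star s u -> dist_star t u.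
Proof. intros; apply rt_trans with s; [apply rt_step, ds_top|]; assumption. Qed.

Lemma par_dist_star t t' : par t t' -> dist_star t t'.
Proof.
  induction 1.
  - apply rt_refl.
  - now apply dist_star_lam.
  - now apply dist_star_app.
  - now apply dist_star_pair.
  - now apply dist_star_proj.
  - eapply rt_trans; [apply dist_star_app; [apply dist_star_lam|]; eauto|].
    apply rt_step, ds_top, top_beta.
  - eapply dist_star_top; [apply top_pi1 | assumption].
  - eapply dist_star_top; [apply top_pi2 | assumption].
  - eapply dist_star_top; [apply top_app_pair | auto using dist_star_pair, dist_star_app].
  - eapply dist_star_top; [apply top_pi_lam | auto using dist_star_lam, dist_star_proj].
Qed.

Lemma internal_star_refl t : internal_star t t.
Proof. induction t; constructor; auto; apply rt_refl. Qed.

Lemma internal_star_trans t u v :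
  internal_star t u -> internal_star u v -> internal_star t v.
Proof.
  intros Htu; revert v; induction Htu; intros v Huv; inversion Huv; subst;
    constructor; try eapply rt_trans; eauto.
Qed.

Lemma ipar_internal_star t t' : ipar t t' -> internal_star t t'.
Proof. induction 1; constructor; auto using par_dist_star. Qed.

Lemma internal_star_dist_star t t' : internal_star t t' -> dist_star t t'.
Proof.
  induction 1; auto using dist_star_lam, dist_star_pair, dist_star_app, dist_star_proj.
  apply rt_refl.
Qed.

Lemma head_star_app t t' u : head_star t t' -> head_star (App t u) (App t' u).
Proof. apply (clos_rt_map _ _ (fun x => App x u)); intros; now apply head_app. Qed.

Lemma head_star_proj b t t' : head_star t t' -> head_star (Proj b t) (Proj b t').
Proof. apply (clos_rt_map _ _ (Proj b)), head_proj. Qed.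

Lemma head_star_top t s u : top_step t s -> head_star s u -> head_star t u.
Proof. intros; apply rt_trans with s; [apply rt_step, head_top|]; assumption. Qed.

Lemma head_step_subst t t' k u : head_step t t' -> head_step (subst k u t) (subst k u t').
Proof.
  induction 1 as [t t' Htop | |]; simpl; try (constructor; assumption).
  destruct Htop; simpl; apply head_top; try constructor.
  unfold subst0; rewrite subst_subst by lia; constructor.
Qed.

Lemma head_star_subst t t' k u : head_star t t' -> head_star (subst k u t) (subst k u t').
Proof. apply (clos_rt_map _ _ (subst k u)); auto using head_step_subst. Qed.

Definition head_ipar t t' := exists u, head_star t u /\ ipar u t'.

Lemma ipar_head_ipar t t' : ipar t t' -> head_ipar t t'.
Proof. exists t; split; [apply rt_refl | assumption]. Qed.

Lemma head_ipar_subst t t' : ipar t t' -> forall k u u', par u u' -> head_ipar u u' ->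
  head_ipar (subst k u t) (subst k u' t').
Proof.
  induction 1 as [n | t t' Ht | t t' a a' Ht Ha | t t' a a' _ IH Ha | b t t' _ IH];
    intros k u u' Hu Huu'; simpl.
  - destruct (Nat.compare n k); auto using ipar_head_ipar, ipar_var.
  - apply ipar_head_ipar, ipar_lam, par_subst; auto using par_lift.
  - apply ipar_head_ipar, ipar_pair; apply par_subst; assumption.
  - destruct (IH k u u' Hu Huu') as (w & Hw & Hwt).
    exists (App w (subst k u a)); split; [now apply head_star_app|].
    apply ipar_app; [assumption | now apply par_subst].
  - destruct (IH k u u' Hu Huu') as (w & Hw & Hwt).
    exists (Proj b w); split; [now apply head_star_proj | now apply ipar_proj].
Qed.

Lemma par_head_ipar t t' : par t t' -> head_ipar t t'.
Proof.
  induction 1 as [n | t t' Ht | t t' u u' _ [w [Hw Hwt]] Hu _ | t t' u u' Ht _ Hu _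
    | b t t' _ [w [Hw Hwt]] | t t' u u' _ [w [Hw Hwt]] Hu IHu
    | t1 t1' t2 _ [w [Hw Hwt]] | t1 t2 t2' _ [w [Hw Hwt]] | t t' s s' u u' Ht Hs Hu
    | b t t' Ht].
  - apply ipar_head_ipar, ipar_var.
  - now apply ipar_head_ipar, ipar_lam.
  - exists (App w u); split; [now apply head_star_app | now apply ipar_app].
  - now apply ipar_head_ipar, ipar_pair.
  - exists (Proj b w); split; [now apply head_star_proj | now apply ipar_proj].
  - destruct (head_ipar_subst w t' Hwt 0 u u' Hu IHu) as (v & Hv & Hvt).
    exists v; split; [|assumption].
    apply head_star_top with (subst0 u t); [apply top_beta|].
    apply rt_trans with (subst0 u w); [now apply head_star_subst | assumption].
  - exists w; split; [apply head_star_top with t1; [apply top_pi1|] |]; assumption.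
  - exists w; split; [apply head_star_top with t2; [apply top_pi2|] |]; assumption.
  - exists (Pair (App t u) (App s u)); split.
    + apply rt_step, head_top, top_app_pair.
    + apply ipar_pair; apply par_app; assumption.
  - exists (Lam (Proj b t)); split.
    + apply rt_step, head_top, top_pi_lam.
    + now apply ipar_lam, par_proj.
Qed.

(* An internal step cannot create a head redex: [ipar] preserves the constructor at
   each position of the head spine, so the head redex of [u] is already in [t]. *)
Lemma ipar_head_step_swap t u v :
  ipar t u -> head_step u v -> exists w, head_star t w /\ par w v.
Proof.
  intros Htu Huv; revert t Htu.
  induction Huv as [u v Htop | u u' a _ IH | b u u' _ IH]; intros t Htu.
  - destruct Htop;
      repeat match goal with
      | H : ipar ?x ?y |- _ =>
          is_var x; tryif is_var y then fail else (inversion H; subst; clear H)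
      end;
      eexists; (split; [apply rt_step, head_top; constructor|]).
    + apply par_subst; auto using ipar_par.
    + assumption.
    + assumption.
    + apply par_pair; apply par_app; auto using ipar_par.
    + now apply par_lam, par_proj.
  - inversion Htu as [| | | t0 t0' a0 a0' Ht0 Ha0 | ]; subst.
    destruct (IH t0 Ht0) as (w & Hw & Hwu).
    exists (App w a0); split; [now apply head_star_app | now apply par_app].
  - inversion Htu as [| | | | b0 t0 t0' Ht0]; subst.
    destruct (IH t0 Ht0) as (w & Hw & Hwu).
    exists (Proj b w); split; [now apply head_star_proj | now apply par_proj].
Qed.

Lemma ipar_head_star_swap t u v : ipar t u -> head_star u v -> head_ipar t v.
Proof.
  intros Htu Huv; apply clos_rt_rt1n in Huv; revert t Htu.
  induction Huv as [u | u u' v Huu' _ IH]; intros t Htu.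
  - now apply ipar_head_ipar.
  - destruct (ipar_head_step_swap t u u' Htu Huu') as (w & Htw & Hwu').
    destruct (par_head_ipar w u' Hwu') as (x & Hwx & Hxu').
    destruct (IH x Hxu') as (y & Hxy & Hyv).
    exists y; split; [|assumption].
    apply rt_trans with w; [assumption | now apply rt_trans with x].
Qed.

Lemma dist_star_head_internal t s :
  dist_star t s -> exists u, head_star t u /\ internal_star u s.
Proof.
  intros Hts; apply clos_rt_rt1n in Hts.
  induction Hts as [t | t t' s Htt' _ (u & Ht'u & Hus)].
  - exists t; split; [apply rt_refl | apply internal_star_refl].
  - destruct (par_head_ipar t t' (dist_step_par t t' Htt')) as (w & Htw & Hwt').
    destruct (ipar_head_star_swap w t' u Hwt' Ht'u) as (x & Hwx & Hxu).
    exists x; split; [now apply rt_trans with w|].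
    apply internal_star_trans with u; [now apply ipar_internal_star | assumption].
Qed.

Lemma head_step_neutral t t' : head_step t t' -> neutral t.
Proof. intros [t0 t0' [] | |]; exact I. Qed.

Lemma head_step_lo_step t t' : head_step t t' -> lo_step t t'.
Proof.
  induction 1 as [t t' [] | t t' u Ht IH | b t t' _ IH];
    [constructor .. | apply lo_appl | apply lo_proj]; auto.
  now apply head_step_neutral with t'.
Qed.

Lemma head_star_lo_star t t' : head_star t t' -> lo_star t t'.
Proof. apply (clos_rt_map _ _ (fun x => x)), head_step_lo_step. Qed.

Lemma lo_step_neutral_inv t t' : lo_step t t' -> neutral t' -> neutral t.
Proof. destruct 1; simpl; auto. Qed.

Lemma lo_star_app_l t t' u : lo_star t t' -> neutral t' -> lo_star (App t u) (App t' u).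
Proof.
  apply (clos_rt_map_inv _ _ neutral (fun x => App x u)).
  - apply lo_step_neutral_inv.
  - intros; now apply lo_appl.
Qed.

Lemma lo_star_app_r t u u' :
  neutral t -> normal t -> lo_star u u' -> lo_star (App t u) (App t u').
Proof. intros Hne Hn; apply (clos_rt_map _ _ (App t)); auto using lo_appr. Qed.

Lemma lo_star_lam t t' : lo_star t t' -> lo_star (Lam t) (Lam t').
Proof. apply (clos_rt_map _ _ Lam), lo_lam. Qed.

Lemma lo_star_pair_l t t' u : lo_star t t' -> lo_star (Pair t u) (Pair t' u).
Proof. apply (clos_rt_map _ _ (fun x => Pair x u)); intros; now apply lo_pairl. Qed.

Lemma lo_star_pair_r t u u' : normal t -> lo_star u u' -> lo_star (Pair t u) (Pair t u').
Proof. intros Hn; apply (clos_rt_map _ _ (Pair t)); auto using lo_pairr. Qed.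

Lemma lo_star_proj b t t' : lo_star t t' -> lo_star (Proj b t) (Proj b t').
Proof. apply (clos_rt_map _ _ (Proj b)), lo_proj. Qed.

Lemma normal_ctx (C : term -> term) t :
  (forall u u', dist_step u u' -> dist_step (C u) (C u')) -> normal (C t) -> normal t.
Proof. intros HC Hn u Hu; exact (Hn _ (HC _ _ Hu)). Qed.

Lemma normal_app_neutral t u : normal (App t u) -> neutral t.
Proof.
  intros Hn; destruct t; simpl; auto.
  - exact (Hn _ (ds_top _ _ (top_beta _ _))).
  - exact (Hn _ (ds_top _ _ (top_app_pair _ _ _))).
Qed.

Theorem theorem2 : forall t s : term,
  dist_star t s -> normal s -> lo_star t s.
Proof.
  intros t s; revert t.
  induction s as [n | s IH | s1 IH1 s2 IH2 | s1 IH1 s2 IH2 | b s IH];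
    intros t Hts Hs;
    destruct (dist_star_head_internal t _ Hts) as (u & Htu & Hus);
    (apply rt_trans with u; [now apply head_star_lo_star|]);
    inversion Hus as [| a a' Ha | a1 a1' a2 a2' Ha1 Ha2 | a1 a1' a2 a2' Ha1 Ha2
                     | c a a' Ha]; subst.
  - apply rt_refl.
  - apply lo_star_lam, IH; [assumption|].
    apply (normal_ctx Lam); [apply ds_lam | assumption].
  - assert (Hs1 : normal s1)
      by (apply (normal_ctx (fun x => App x s2)) in Hs; auto using ds_appl).
    assert (Hs2 : normal s2)
      by (apply (normal_ctx (App s1)) in Hs; auto using ds_appr).
    assert (Hne : neutral s1) by now apply normal_app_neutral with s2.
    apply rt_trans with (App s1 a2).
    + apply lo_star_app_l; [apply IH1; auto using internal_star_dist_star | assumption].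
    + apply lo_star_app_r, IH2; assumption.
  - assert (Hs1 : normal s1)
      by (apply (normal_ctx (fun x => Pair x s2)) in Hs; auto using ds_pairl).
    assert (Hs2 : normal s2)
      by (apply (normal_ctx (Pair s1)) in Hs; auto using ds_pairr).
    apply rt_trans with (Pair s1 a2).
    + apply lo_star_pair_l, IH1; assumption.
    + apply lo_star_pair_r, IH2; assumption.
  - apply lo_star_proj, IH; [now apply internal_star_dist_star|].
    apply (normal_ctx (Proj b)); [apply ds_proj | assumption].
Qed.
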